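(* Let $q$ be a power of an odd prime. Let $H_q$ be the graph obtained from $G_q$ by adding $q+1$ new vertices $y$ and $z_b$ ($b\in\mathbb{F}_q$), where each $z_b$ is joined to all vertices $(b,x)$ with $x\in\mathbb{F}_q$, $y$ is joined to every $z_b$, and there are no other new edges. Then $H_q$ is isomorphic to the graph whose vertices are the $1$-dimensional subspaces of $\mathbb{F}_q^3$, with distinct vertices $(x_0,x_1,x_2)$ and $(y_0,y_1,y_2)$ (homogeneous coordinates) adjacent if and only if $x_0y_2+x_2y_0=x_1y_1$. An isomorphism is given by $(0,b)\mapsto(1,0,2^{-1}b)$ for $b\in\mathbb{F}_q$; $(a,b)\mapsto(1,a,2^{-1}(b-a^2))$ for $a\ne0$; $y\mapsto(0,0,1)$; $z_b\mapsto(0,1,b)$.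
   Context: For a power $q$ of an odd prime, let $A=\{(a,a^2):a\in\mathbb{F}_q\}$. The graph $G_q$ has vertex set $\mathbb{F}_q\times\mathbb{F}_q$, and distinct vertices $(x_1,x_2)$, $(y_1,y_2)$ are adjacent if and only if $(x_1+y_1,x_2+y_2)\in A$, i.e. $(x_1+y_1)^2=x_2+y_2$; $G_q$ has no loops. *)

From HB Require Import structures.
From mathcomp Require Import all_boot all_order all_algebra all_field.
Set Implicit Arguments. Unset Strict Implicit. Unset Printing Implicit Defensive.
Import Order.TTheory GRing.Theory Num.Theory.
Local Open Scope ring_scope.

Section Defs.
Variable F : finFieldType.

Definition vec3 (x0 x1 x2 : F) : 'rV[F]_3 :=
  \row_(i < 3) [:: x0; x1; x2]`_i.

Definition crd (v : 'rV[F]_3) (i : nat) : F := v ord0 (inord i).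

Definition qform (x y : 'rV[F]_3) : F :=
  crd x 0 * crd y 2 + crd x 2 * crd y 0 - crd x 1 * crd y 1.

Definition line (v : 'rV[F]_3) : {set 'rV[F]_3} := [set a *: v | a : F].

Definition is_point (S : {set 'rV[F]_3}) : bool :=
  [exists v : 'rV[F]_3, (v != 0) && (S == line v)].

Definition PG := {S : {set 'rV[F]_3} | is_point S}.

(** Distinct points are adjacent iff x0 y2 + x2 y0 = x1 y1 for (any, equivalently
    some) homogeneous coordinates. *)
Definition adjP (L M : PG) : bool :=
  (L != M) && [exists x : 'rV[F]_3, exists y : 'rV[F]_3,
     [&& x \in val L, y \in val M, x != 0, y != 0 & qform x y == 0]].

Lemma line_point (v : 'rV[F]_3) : v != 0 -> is_point (line v).
Proof. by move=> hv; apply/existsP; exists v; rewrite hv eqxx. Qed.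

Lemma vec3_001_neq0 : vec3 0 0 1 != 0.
Proof.
apply/eqP => /matrixP /(_ ord0 (inord 2)).
by rewrite !mxE inordK //= => /eqP; rewrite oner_eq0.
Qed.

Definition pt0 : PG := exist _ (line (vec3 0 0 1)) (line_point vec3_001_neq0).

(** The point with homogeneous coordinates (x0 : x1 : x2)
    (only used with nonzero vectors; pt0 is an irrelevant default). *)
Definition pt (x0 x1 x2 : F) : PG := insubd pt0 (line (vec3 x0 x1 x2)).

Definition adjG (u v : F * F) : bool :=
  (u != v) && ((u.1 + v.1) ^+ 2 == u.2 + v.2).

(** Vertices of H_q: inl (x1,x2) is a vertex of G_q, inr None is y,
    inr (Some b) is z_b. *)
Definition HV := ((F * F) + option F)%type.

Definition adjH (u v : HV) : bool :=
  match u, v with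
  | inl a, inl b => adjG a b
  | inl a, inr (Some b) => a.1 == b
  | inr (Some b), inl a => a.1 == b
  | inr None, inr (Some _) => true
  | inr (Some _), inr None => true
  | _, _ => false
  end.

Definition phi (u : HV) : PG :=
  match u with
  | inl (a, b) => if a == 0 then pt 1 0 (b / 2%:R)
                  else pt 1 a ((b - a ^+ 2) / 2%:R)
  | inr None => pt 0 0 1
  | inr (Some b) => pt 0 1 b
  end.

End Defs.

From HB Require Import structures.
From mathcomp Require Import all_boot all_order all_algebra all_field.
From mathcomp Require Import ring.
Set Implicit Arguments. Unset Strict Implicit. Unset Printing Implicit Defensive.
Import Order.TTheory GRing.Theory Num.Theory.
Local Open Scope ring_scope.

(* Every point of PG(2,q) has a unique representative of one of the forms
   (1, a, c), (0, 1, b) or (0, 0, 1); writing c = (b - a^2)/2 turns the form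
   into x0 y2 + x2 y0 - x1 y1 = ((b + d) - (a + c)^2) / 2 on the first kind,
   which is the adjacency of G_q, while on the other kinds it only compares
   first coordinates or is constantly zero/nonzero, as in H_q. *)

Lemma pchar_odd_two_neq0 (R : nzRingType) (p : nat) :
  p \in [pchar R] -> odd p -> (2%:R : R) != 0.
Proof.
move=> hp; rewrite -(dvdn_pcharf hp); apply: contraL => /(dvdn_leq (ltn0Sn 1)).
by have := prime_gt1 (pcharf_prime hp); case: p {hp} => [|[|[|]]].
Qed.

Lemma inj_surj_bij (T T' : finType) (f : T -> T') :
  injective f -> (forall y, exists x, f x = y) -> bijective f.
Proof.
move=> inj_f surj_f; apply: (inj_card_bij inj_f).
rewrite -(card_codom inj_f); apply/subset_leq_card/subsetP => y _.
by have [x <-] := surj_f y; apply: codom_f.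
Qed.

Section Coordinates.
Variable F : finFieldType.

Lemma crd_vec3 (a b c : F) :
  [/\ crd (vec3 a b c) 0 = a, crd (vec3 a b c) 1 = b & crd (vec3 a b c) 2 = c].
Proof. by rewrite /crd !mxE !inordK. Qed.

Lemma crdZ (k : F) v i : crd (k *: v) i = k * crd v i.
Proof. by rewrite /crd mxE. Qed.

Lemma vec3_crd (v : 'rV[F]_3) : v = vec3 (crd v 0) (crd v 1) (crd v 2).
Proof.
apply/rowP => j; rewrite !mxE /crd.
have crd_ord k (lt_k3 : (k < 3)%N) : v 0 (Ordinal lt_k3) = v ord0 (inord k).
  by congr (v _ _); apply/val_inj; rewrite /= inordK.
by case: j => [[|[|[|j]]] lt_j3] //=; rewrite -crd_ord.
Qed.

Lemma vec3_inj (a b c a' b' c' : F) :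
  vec3 a b c = vec3 a' b' c' -> [/\ a = a', b = b' & c = c'].
Proof.
move=> e; have := crd_vec3 a b c; rewrite e.
by case: (crd_vec3 a' b' c') => -> -> -> [-> -> ->].
Qed.

Lemma vec3Z (k a b c : F) : k *: vec3 a b c = vec3 (k * a) (k * b) (k * c).
Proof. by apply/rowP => j; rewrite !mxE; case: j => [[|[|[|j]]] ?]. Qed.

Lemma vec3_eq0 (a b c : F) : (vec3 a b c == 0) = [&& a == 0, b == 0 & c == 0].
Proof.
have -> : (0 : 'rV[F]_3) = vec3 0 0 0.
  by apply/rowP => j; rewrite !mxE; case: j => [[|[|[|j]]] ?].
apply/eqP/and3P => [/vec3_inj [-> -> ->] //|[/eqP -> /eqP -> /eqP ->] //].
Qed.

Lemma qformZ (k l : F) x y : qform (k *: x) (l *: y) = k * l * qform x y.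
Proof. by rewrite /qform !crdZ; ring. Qed.

Lemma qform_vec3 (a b c a' b' c' : F) :
  qform (vec3 a b c) (vec3 a' b' c') = a * c' + c * a' - b * b'.
Proof.
rewrite /qform; case: (crd_vec3 a b c) => -> -> ->.
by case: (crd_vec3 a' b' c') => -> -> ->.
Qed.

Lemma mem_line (v : 'rV[F]_3) : v \in line v.
Proof. by apply/imsetP; exists 1; rewrite ?scale1r. Qed.

Lemma lineZ (k : F) (v : 'rV[F]_3) : k != 0 -> line (k *: v) = line v.
Proof.
move=> k_neq0; apply/setP => w; apply/imsetP/imsetP => [[a _ ->]|[a _ ->]].
  by exists (a * k); rewrite // scalerA.
by exists (a / k); rewrite // scalerA mulfVK.
Qed.

Lemma val_pt (a b c : F) :
  vec3 a b c != 0 -> val (pt a b c) = line (vec3 a b c).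
Proof. by move=> h; rewrite /pt insubdK //; apply: line_point. Qed.

Lemma adjP_lines (L M : PG F) (x y : 'rV[F]_3) : x != 0 -> y != 0 ->
  val L = line x -> val M = line y -> adjP L M = (L != M) && (qform x y == 0).
Proof.
move=> x_neq0 y_neq0 eL eM; rewrite /adjP; congr (_ && _); apply/idP/idP.
  case/existsP => x' /existsP [y' /and5P []].
  rewrite eL eM => /imsetP [a _ ->] /imsetP [b _ ->].
  rewrite !scaler_eq0 qformZ !mulf_eq0 => /norP [a_neq0 _] /norP [b_neq0 _].
  by rewrite (negbTE a_neq0) (negbTE b_neq0).
move=> qxy; apply/existsP; exists x; apply/existsP; exists y.
by rewrite eL eM !mem_line x_neq0 y_neq0.
Qed.

End Coordinates.

Section Isomorphism.
Variable F : finFieldType.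

(* For u = (0, b) this is (1, 0, b/2), agreeing with the first branch of phi. *)
Definition phi_vec (u : HV F) : 'rV[F]_3 :=
  match u with
  | inl (a, b) => vec3 1 a ((b - a ^+ 2) / 2%:R)
  | inr None => vec3 0 0 1
  | inr (Some b) => vec3 0 1 b
  end.

Lemma phi_vec_neq0 u : phi_vec u != 0.
Proof. by case: u => [[a b]|[b|]]; rewrite /= vec3_eq0 ?oner_eq0 ?eqxx ?andbF. Qed.

Lemma val_phi (u : HV F) : val (phi u) = line (phi_vec u).
Proof.
have := phi_vec_neq0 u.
case: u => [[a b]|[b|]] /= u_neq0; try by rewrite val_pt.
case: ifP => [/eqP a0|_]; last by rewrite val_pt.
by move: u_neq0; rewrite a0 expr0n subr0 => ?; rewrite val_pt.
Qed.

Hypothesis two_neq0 : (2%:R : F) != 0.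

Lemma qform_phi_vec_inl (a b c d : F) :
  qform (phi_vec (inl (a, b))) (phi_vec (inl (c, d))) =
  (b + d - (a + c) ^+ 2) / 2%:R.
Proof. by rewrite qform_vec3; field. Qed.

Lemma phi_inj : injective (@phi F).
Proof.
move=> u v phi_uv.
have : phi_vec v \in line (phi_vec u) by rewrite -(val_phi u) phi_uv val_phi mem_line.
case/imsetP => k _; clear phi_uv.
case: u v => [[a b]|[b|]] [[c d]|[c|]] /=; rewrite vec3Z => /vec3_inj [];
  rewrite ?mulr0 ?mulr1.
- by move=> <-; rewrite !mul1r => -> /(mulIf (invr_neq0 two_neq0)) /addIr ->.
- by move=> <-; rewrite mul0r => /eqP; rewrite oner_eq0.
- by move=> <- _; rewrite mul0r => /eqP; rewrite oner_eq0.
- by move=> /eqP; rewrite oner_eq0.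
- by move=> _ <-; rewrite mul1r => ->.
- by move=> _ <-; rewrite mul0r => /eqP; rewrite oner_eq0.
- by move=> /eqP; rewrite oner_eq0.
- by move=> _ /eqP; rewrite oner_eq0.
- by [].
Qed.

Lemma phi_vec_onto (v : 'rV[F]_3) : v != 0 ->
  exists u k, k != 0 /\ phi_vec u = k *: v.
Proof.
rewrite [v]vec3_crd vec3_eq0.
set x0 := crd v 0; set x1 := crd v 1; set x2 := crd v 2 => v_neq0.
have [x0_eq0|x0_neq0] := eqVneq x0 0.
  have [x1_eq0|x1_neq0] := eqVneq x1 0.
    move: v_neq0; rewrite x0_eq0 x1_eq0 !eqxx /= => x2_neq0.
    by exists (inr None), x2^-1; rewrite invr_neq0 // vec3Z !mulr0 mulVf.
  exists (inr (Some (x2 / x1))), x1^-1.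
  by rewrite invr_neq0 // vec3Z x0_eq0 mulr0 mulVf // mulrC.
exists (inl (x1 / x0, 2%:R * x2 / x0 + (x1 / x0) ^+ 2)), x0^-1.
rewrite invr_neq0 //= vec3Z mulVf // addrK; split=> //.
by congr vec3; field; rewrite ?x0_neq0 ?two_neq0.
Qed.

Lemma phi_surj (L : PG F) : exists u, phi u = L.
Proof.
have /existsP [v /andP [v_neq0 /eqP eL]] := valP L.
have [u [k [k_neq0 e]]] := phi_vec_onto v_neq0.
by exists u; apply/val_inj; rewrite eL val_phi e lineZ.
Qed.

Lemma phi_adj (u v : HV F) : adjH u v = adjP (phi u) (phi v).
Proof.
rewrite (adjP_lines (phi_vec_neq0 u) (phi_vec_neq0 v) (val_phi u) (val_phi v)).
rewrite (inj_eq phi_inj).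
case: u v => [[a b]|[b|]] [[c d]|[c|]].
  rewrite qform_phi_vec_inl /adjG /=; congr (_ && _).
  by rewrite mulf_eq0 invr_eq0 (negbTE two_neq0) orbF subr_eq0 eq_sym.
all: rewrite /= ?qform_vec3 ?mul0r ?mulr0 ?mul1r ?mulr1 ?add0r ?addr0 ?sub0r
  ?subr0 ?oppr_eq0 ?oner_eq0 ?andbF ?eqxx //.
all: by rewrite subr_eq0 eq_sym.
Qed.

End Isomorphism.

Theorem mainTheorem6 (F : finFieldType) (p : nat) :
  prime p -> odd p -> p \in [pchar F] ->
  (exists f : HV F -> PG F,
     bijective f /\ forall u v : HV F, adjH u v = adjP (f u) (f v)) /\
  (bijective (@phi F) /\ forall u v : HV F, adjH u v = adjP (phi u) (phi v)).
Proof.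
move=> _ odd_p p_char.
have two_neq0 := pchar_odd_two_neq0 p_char odd_p.
have phi_bij : bijective (@phi F).
  exact: inj_surj_bij (phi_inj two_neq0) (phi_surj two_neq0).
by split; [exists (@phi F)|]; split=> //; apply: phi_adj.
Qed.
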